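(* Let $G$ be a group with a split $BN$-pair $(H,U,N)$ with finite Weyl group, let $n_0\in N$ represent the longest element of the Weyl group and $U^-:=U^{n_0}$. Then $H\cap UU^-U=\{1\}$.
   Context: A split $BN$-pair $(H,U,N)$ for $G$ means $B=H\ltimes U$ and $N$ satisfy the axioms of split $BN$-pairs (as in Carter, Finite Groups of Lie Type, \S 2.5) with $H=B\cap N$. Products are setwise. *)

From HB Require Import structures.
From mathcomp Require Import all_boot.
From Stdlib Require List.

Set Implicit Arguments.
Unset Strict Implicit.
Unset Printing Implicit Defensive.

Local Open Scope group_scope.

Section BNPairs.
Variable gT : groupType.

Definition gsubset := gT -> Prop.

Definition sub_of (A C : gsubset) : Prop := forall g, A g -> C g.

Definition is_subgrp (A : gsubset) : Prop :=
  A 1 /\ (forall x y, A x -> A y -> A (x * y)) /\ (forall x, A x -> A x^-1).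

Definition normal_in (A C : gsubset) : Prop :=
  is_subgrp A /\ sub_of A C /\ forall x c, A x -> C c -> A (x ^ c).

Definition setmul (A C : gsubset) : gsubset :=
  fun g => exists a c, A a /\ C c /\ g = a * c.

Definition conjset (A : gsubset) (x : gT) : gsubset :=
  fun g => exists a, A a /\ g = a ^ x.

Definition dcoset (B : gsubset) (x : gT) : gsubset :=
  fun g => exists b1 b2, B b1 /\ B b2 /\ g = b1 * x * b2.

Definition generates (A C : gsubset) : Prop :=
  forall K, is_subgrp K -> sub_of A K -> sub_of C K -> forall g, K g.

Definition in_gen (A C D : gsubset) : Prop :=
  forall K, is_subgrp K -> sub_of C K -> sub_of D K -> sub_of A K.

(* (B, N) is a BN-pair of gT (Carter, Finite Groups of Lie Type, 2.1) with
   H = B ∩ N and with the Weyl group W = N/H generated by the involutions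
   represented by the elements of S. *)
Definition BN_pair (B N H S : gsubset) : Prop :=
  is_subgrp B /\ is_subgrp N /\
  generates B N /\
  (forall g, H g <-> (B g /\ N g)) /\ normal_in H N /\
  (forall s, S s -> N s /\ ~ H s /\ H (s * s)) /\ in_gen N S H /\
  (forall s n b, S s -> N n -> B b ->
      dcoset B n (s * b * n) \/ dcoset B (s * n) (s * b * n)) /\
  (forall s, S s ->
      ~ (forall g, (exists b, B b /\ g = s * b * s) <-> B g)).

(* split BN-pair (H, U, N) with B = H ⋉ U (Carter, 2.5) *)
Definition split_BN_pair (H U N S : gsubset) : Prop :=
  [/\ BN_pair (setmul H U) N H S,
      normal_in U (setmul H U),
      (forall g, H g -> U g -> g = 1)
    & (forall g, (forall n, N n -> conjset (setmul H U) n g) <-> H g)].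

Definition finite_weyl (N H : gsubset) : Prop :=
  exists l : seq gT, forall n, N n -> exists m h, List.In m l /\ H h /\ n = m * h.

Definition word_of (H S : gsubset) (n : gT) (k : nat) : Prop :=
  exists (l : seq gT) h, size l = k /\ (forall s, List.In s l -> S s) /\ H h /\
    n = foldr (fun x y => x * y) 1 l * h.

Definition weyl_length (H S : gsubset) (n : gT) (k : nat) : Prop :=
  word_of H S n k /\ forall k', word_of H S n k' -> k <= k'.

Definition longest_rep (N H S : gsubset) (n0 : gT) : Prop :=
  N n0 /\ exists k0, weyl_length H S n0 k0 /\
    forall n k, N n -> weyl_length H S n k -> k <= k0.

End BNPairs.

(* In a BN-pair the double coset [B n B] determines [n] modulo [H], and
   [s B w] lies in [B s w B] whenever [l(s w) >= l(w)], where [l] is the length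
   with respect to [S].  These two facts yield the exchange condition, and through
   the dihedral subgroups [<r, s>] they show that every [n] in [N] is a prefix of
   the longest element: [l(n0) = l(n) + l(n^-1 n0)].  Peeling such a decomposition
   one letter at a time shows that if [y] and [n0 y n0^-1] lie in [B], then so
   does [n y n^-1] for every [n] in [N], whence [y] lies in [H] by the split axiom.
   For [h = u w^n0 u'] in [H] with [u, u', w] in [U] this applies to [y = w^n0]:
   then [w] lies in [H :&: U = 1], and [h = u u'] lies in [H :&: U = 1] too. *)

From HB Require Import structures.
From mathcomp Require Import all_boot zify boolp.
From Stdlib Require List.

Set Implicit Arguments.
Unset Strict Implicit.
Unset Printing Implicit Defensive.

Local Open Scope group_scope.
Local Notation Forall := List.Forall.

Lemma Forall_rcons (T : Type) (P : T -> Prop) l a :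
  Forall P (rcons l a) <-> Forall P l /\ P a.
Proof.
rewrite -cats1 List.Forall_app List.Forall_cons_iff.
by split=> [[? []]|[? ?]]; do ?split.
Qed.

Lemma Forall_rev (T : Type) (P : T -> Prop) l : Forall P l -> Forall P (rev l).
Proof.
elim: l => [|a l IH] //; rewrite rev_cons.
by case/List.Forall_cons_iff=> Pa /IH Pl; apply/Forall_rcons.
Qed.

Fixpoint alt (T : Type) (a b : T) (k : nat) : seq T :=
  if k is k'.+1 then a :: alt b a k' else [::].

Lemma size_alt (T : Type) (a b : T) k : size (alt a b k) = k.
Proof. by elim: k a b => [|k IH] a b //=; rewrite IH. Qed.

Lemma alt_rcons (T : Type) (a b : T) k :
  alt a b k.+1 = rcons (alt a b k) (if odd k then b else a).
Proof.
elim: k a b => [|k IH] a b //; rewrite -[alt a b k.+2]/(a :: alt b a k.+1) IH.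
by rewrite -[alt a b k.+1]/(a :: alt b a k) rcons_cons /=; case: (odd k).
Qed.

Lemma alt_take (T : Type) (a b : T) i k : i <= k -> take i (alt a b k) = alt a b i.
Proof.
by elim: k i a b => [|k IH] [|i] a b //= le_ik; rewrite IH.
Qed.

Lemma Forall_alt (T : Type) (P : T -> Prop) a b k : P a -> P b -> Forall P (alt a b k).
Proof. by elim: k a b => [|k IH] a b Pa Pb //=; constructor; last exact: IH. Qed.

Lemma cat_split (T : Type) (w l L1 L2 : seq T) a : w ++ l = L1 ++ a :: L2 ->
  (exists M, w = L1 ++ a :: M /\ L2 = M ++ l) \/ (exists M, L1 = w ++ M /\ l = M ++ a :: L2).
Proof.
elim: w L1 => [|b w IH] L1 /=; first by move=> E; right; exists L1.
case: L1 => [|c L1] /= [-> E]; first by left; exists w; rewrite E.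
by case: (IH _ E) => [[M [-> ->]] | [M [-> ->]]]; [left | right]; exists M.
Qed.

Lemma invg_sq (gT : groupType) (x : gT) : x^-1 = x * (x * x)^-1.
Proof. by rewrite invgM mulgA mulgV mul1g. Qed.

Definition wprod (gT : groupType) (l : seq gT) : gT := foldr (fun x y => x * y) 1 l.

Lemma wprod_cons (gT : groupType) (a : gT) l : wprod (a :: l) = a * wprod l.
Proof. by []. Qed.

Lemma wprod_cat (gT : groupType) (l1 l2 : seq gT) :
  wprod (l1 ++ l2) = wprod l1 * wprod l2.
Proof. by elim: l1 => [|a l IH] /=; rewrite ?mul1g // IH mulgA. Qed.

Lemma wprod_rcons (gT : groupType) (l : seq gT) a : wprod (rcons l a) = wprod l * a.
Proof. by rewrite -cats1 wprod_cat /= mulg1. Qed.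

Section BNPairTheory.

Variables (gT : groupType) (B N H S : gT -> Prop).

Hypotheses (subgrpB : is_subgrp B) (subgrpN : is_subgrp N).
Hypothesis H_BN : forall g, H g <-> B g /\ N g.
Hypothesis normalH : normal_in H N.
Hypothesis S_involution : forall s, S s -> N s /\ ~ H s /\ H (s * s).
Hypothesis N_gen : in_gen N S H.
Hypothesis dcoset_SBN : forall s n b, S s -> N n -> B b ->
  dcoset B n (s * b * n) \/ dcoset B (s * n) (s * b * n).
Hypothesis S_not_normalizing : forall s, S s ->
  ~ (forall g, (exists b, B b /\ g = s * b * s) <-> B g).

Lemma B1 : B 1. Proof. by case: subgrpB. Qed.
Lemma BM x y : B x -> B y -> B (x * y). Proof. by case: subgrpB => _ [BM _]; exact: BM. Qed.
Lemma BV x : B x -> B x^-1. Proof. by case: subgrpB => _ [_ BV]; exact: BV. Qed.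
Lemma N1 : N 1. Proof. by case: subgrpN. Qed.
Lemma NM x y : N x -> N y -> N (x * y). Proof. by case: subgrpN => _ [NM _]; exact: NM. Qed.
Lemma NV x : N x -> N x^-1. Proof. by case: subgrpN => _ [_ NV]; exact: NV. Qed.
Lemma H1 : H 1. Proof. by case: normalH => [[]]. Qed.
Lemma HM x y : H x -> H y -> H (x * y). Proof. by case: normalH => [[_ [HM _]] _]; exact: HM. Qed.
Lemma HV x : H x -> H x^-1. Proof. by case: normalH => [[_ [_ HV]] _]; exact: HV. Qed.
Lemma HB x : H x -> B x. Proof. by case/H_BN. Qed.
Lemma HN x : H x -> N x. Proof. by case/H_BN. Qed.
Lemma SN s : S s -> N s. Proof. by case/S_involution. Qed.
Lemma S_notH s : S s -> ~ H s. Proof. by case/S_involution=> _ []. Qed.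
Lemma H_sq s : S s -> H (s * s). Proof. by case/S_involution=> _ []. Qed.

Lemma HJ h n : H h -> N n -> H (n^-1 * (h * n)).
Proof. by case: normalH => _ [_ HJ] Hh Nn; exact: HJ h n Hh Nn. Qed.

Lemma HJV h n : H h -> N n -> H (n * (h * n^-1)).
Proof. by move=> Hh /NV Nn; have := HJ Hh Nn; rewrite invgK. Qed.

Lemma HN_swap h n : H h -> N n -> exists2 h', H h' & h * n = n * h'.
Proof. by move=> Hh Nn; exists (n^-1 * (h * n)); [exact: HJ | rewrite mulVKg]. Qed.

Lemma NH_swap h n : H h -> N n -> exists2 h', H h' & n * h = h' * n.
Proof. by move=> Hh Nn; exists (n * (h * n^-1)); [exact: HJV | rewrite !mulgA mulgVK]. Qed.

Lemma wprodN l : Forall S l -> N (wprod l).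
Proof.
elim: l => [|a l IH] /=; first by move=> _; exact: N1.
by case/List.Forall_cons_iff=> Sa Sl; apply: NM (SN Sa) (IH Sl).
Qed.

Definition eqH (a b : gT) : Prop := exists2 h, H h & a = b * h.

Lemma eqH_refl a : eqH a a. Proof. by exists 1; [exact: H1 | rewrite mulg1]. Qed.

Lemma eqH_sym a b : eqH a b -> eqH b a.
Proof. by case=> h Hh ->; exists h^-1; [exact: HV | rewrite mulgK]. Qed.

Lemma eqH_trans a b c : eqH a b -> eqH b c -> eqH a c.
Proof. by case=> h Hh -> [h' Hh' ->]; exists (h' * h); [exact: HM | rewrite mulgA]. Qed.

Lemma eqH_mul2l x a b : eqH a b -> eqH (x * a) (x * b).
Proof. by case=> h Hh ->; exists h; rewrite ?mulgA. Qed.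

Lemma eqH_mul2r x a b : N x -> eqH a b -> eqH (a * x) (b * x).
Proof.
move=> Nx [h Hh ->]; have [h' Hh' E] := HN_swap Hh Nx.
by exists h'; rewrite // -mulgA E mulgA.
Qed.

Lemma eqH_mulH a h : H h -> eqH (a * h) a. Proof. by exists h. Qed.

Lemma eqH_N a b : N b -> eqH a b -> N a.
Proof. by move=> Nb [h /HN Nh ->]; exact: NM. Qed.

Lemma eqH_mulSS s a : S s -> N a -> eqH (s * (s * a)) a.
Proof.
by move=> Ss Na; rewrite mulgA; have [h Hh ->] := HN_swap (H_sq Ss) Na; exact: eqH_mulH.
Qed.

Lemma eqH_mulSSr x s : S s -> eqH (x * s * s) x.
Proof. by move=> Ss; rewrite -mulgA; apply: eqH_mulH; exact: H_sq. Qed.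

Lemma eqH_mul2lI p a b : eqH (p * a) (p * b) -> eqH a b.
Proof. by case=> h Hh E; exists h; last by apply: (mulgI p); rewrite E mulgA. Qed.

Lemma wprod_rev l : Forall S l -> eqH (wprod l)^-1 (wprod (rev l)).
Proof.
elim: l => [|a l IH]; first by exists 1; rewrite ?invg1 ?mulg1 //; exact: H1.
case/List.Forall_cons_iff=> Sa /IH E; rewrite rev_cons wprod_rcons invgM (invg_sq a) mulgA.
exact: eqH_trans (eqH_mulH _ (HV (H_sq Sa))) (eqH_mul2r (SN Sa) E).
Qed.

Definition inNJ (J : gT -> Prop) (u : gT) : Prop := exists2 l, Forall J l & eqH u (wprod l).

Section ParabolicWords.

Variable J : gT -> Prop.
Hypothesis JS : forall a, J a -> S a.

Lemma inNJ_N u : inNJ J u -> N u.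
Proof. by case=> l Jl E; exact: eqH_N (wprodN (List.Forall_impl _ JS Jl)) E. Qed.

Lemma inNJ_H h : H h -> inNJ J h.
Proof. by move=> Hh; exists [::]; rewrite // -(mul1g h); exact: eqH_mulH. Qed.

Lemma inNJ_J a : J a -> inNJ J a.
Proof.
by move=> Ja; exists [:: a]; [exact: List.Forall_cons | rewrite /= mulg1; exact: eqH_refl].
Qed.

Lemma inNJ_mul u v : inNJ J u -> inNJ J v -> inNJ J (u * v).
Proof.
move=> [l1 J1 E1] [l2 J2 E2]; exists (l1 ++ l2); first exact/List.Forall_app.
have Nv := inNJ_N (ex_intro2 _ _ l2 J2 E2).
by rewrite wprod_cat; apply: eqH_trans (eqH_mul2r Nv E1) (eqH_mul2l _ E2).
Qed.

Lemma inNJ_invg u : inNJ J u -> inNJ J u^-1.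
Proof.
case=> l Jl [h Hh ->]; have Sl := List.Forall_impl _ JS Jl.
exists (rev l); first exact: Forall_rev.
rewrite invgM; have [h' Hh' ->] := HN_swap (HV Hh) (NV (wprodN Sl)).
exact: eqH_trans (eqH_mulH _ Hh') (wprod_rev Sl).
Qed.

End ParabolicWords.

Lemma N_word n : N n -> inNJ S n.
Proof.
apply: (N_gen (K := inNJ S)); last exact: inNJ_H.
  by do !split; [exact: inNJ_H H1 | exact: inNJ_mul | exact: inNJ_invg].
exact: inNJ_J.
Qed.

(** * The length function *)

Lemma word_ofP n k :
  word_of H S n k <-> exists l, [/\ size l = k, Forall S l & eqH n (wprod l)].
Proof.
split=> [[l [h [sz [Sl [Hh E]]]]] | [l [sz /List.Forall_forall Sl [h Hh E]]]].
  by exists l; split=> //; [exact/List.Forall_forall | exists h].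
by exists l, h.
Qed.

(* [len n] is the least length of a word in [S] representing [n] modulo [H];
   it is the junk value 0 when no such word exists, i.e. outside [N]. *)
Lemma len_exists n :
  exists k, asbool (word_of H S n k) || ~~ asbool (exists k, word_of H S n k).
Proof.
case: (asboolP (exists k, word_of H S n k)) => [[k w] | _]; last by exists 0; rewrite orbT.
by exists k; apply/orP; left; apply/asboolP.
Qed.

Definition len n : nat := ex_minn (len_exists n).

Lemma len_reduced n : N n ->
  exists l, [/\ Forall S l, size l = len n & eqH n (wprod l)].
Proof.
move=> Nn; rewrite /len; case: ex_minnP => k + _.
case: asboolP => [/word_ofP[l [sz Sl E]] _ | _]; first by exists l.
case: asboolP => // [[]]; have [l Sl E] := N_word Nn.
by exists (size l); apply/word_ofP; exists l.
Qed.

Lemma len_le_size n l : Forall S l -> eqH n (wprod l) -> len n <= size l.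
Proof.
move=> Sl E; rewrite /len; case: ex_minnP => k _; apply.
have w : word_of H S n (size l) by apply/word_ofP; exists l.
by rewrite (introT (asboolP _) w).
Qed.

Lemma len_wprod_le l : Forall S l -> len (wprod l) <= size l.
Proof. by move=> Sl; apply: len_le_size Sl (eqH_refl _). Qed.

Lemma len_eqH a b : N b -> eqH a b -> len a = len b.
Proof.
have le_len x y : N y -> eqH x y -> len x <= len y.
  move=> Ny Exy; have [l [Sl <- Ey]] := len_reduced Ny.
  exact: len_le_size Sl (eqH_trans Exy Ey).
move=> Nb Eab; apply/eqP; rewrite eqn_leq le_len //=.
exact: le_len (eqH_N Nb Eab) (eqH_sym Eab).
Qed.

Lemma len_mulH n h : N n -> H h -> len (n * h) = len n.
Proof. by move=> Nn Hh; apply: len_eqH Nn (eqH_mulH _ Hh). Qed.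

Lemma len_Hmul n h : N n -> H h -> len (h * n) = len n.
Proof. by move=> Nn Hh; have [h' Hh' ->] := HN_swap Hh Nn; exact: len_mulH. Qed.

Lemma len_H h : H h -> len h = 0.
Proof.
move=> Hh; apply/eqP; rewrite -leqn0; apply: (@len_le_size _ [::]) => //.
by rewrite /= -(mul1g h); exact: eqH_mulH.
Qed.

Lemma len0_H n : N n -> len n = 0 -> H n.
Proof.
move=> Nn E; have [[|a l] [_ sz [h Hh ->]]] := len_reduced Nn; last by rewrite E in sz.
by rewrite mul1g.
Qed.

Lemma len_mul_le a b : N a -> N b -> len (a * b) <= len a + len b.
Proof.
move=> Na Nb; have [la [Sa <- Ea]] := len_reduced Na; have [lb [Sb <- Eb]] := len_reduced Nb.
rewrite -size_cat; apply: len_le_size; first exact/List.Forall_app.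
rewrite wprod_cat; apply: eqH_trans (eqH_mul2r Nb Ea) _; exact: eqH_mul2l.
Qed.

Lemma len_invg n : N n -> len n^-1 = len n.
Proof.
have le_len m : N m -> len m^-1 <= len m.
  move=> Nm; have [l [Sl <- [h Hh ->]]] := len_reduced Nm.
  rewrite -size_rev; apply: len_le_size (Forall_rev Sl) _.
  rewrite invgM; have [h' Hh' ->] := HN_swap (HV Hh) (NV (wprodN Sl)).
  exact: eqH_trans (eqH_mulH _ Hh') (wprod_rev Sl).
move=> Nn; apply/eqP; rewrite eqn_leq le_len //=.
by have := le_len _ (NV Nn); rewrite invgK.
Qed.

Lemma len_S s : S s -> len s = 1%N.
Proof.
move=> Ss; apply/eqP; rewrite eqn_leq; apply/andP; split.
  by have := len_wprod_le (List.Forall_cons _ Ss (List.Forall_nil _)); rewrite /= mulg1.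
by rewrite lt0n; apply/eqP => /(len0_H (SN Ss)); exact: S_notH.
Qed.

Lemma len_SM_le s n : S s -> N n -> len (s * n) <= (len n).+1.
Proof. by move=> Ss Nn; have := len_mul_le (SN Ss) Nn; rewrite (len_S Ss). Qed.

Lemma len_MS_le s n : S s -> N n -> len (n * s) <= (len n).+1.
Proof. by move=> Ss Nn; have := len_mul_le Nn (SN Ss); rewrite (len_S Ss) addn1. Qed.

Lemma len_le_SM s n : S s -> N n -> len n <= (len (s * n)).+1.
Proof.
move=> Ss Nn; have := len_mul_le (NV (SN Ss)) (NM (SN Ss) Nn).
by rewrite mulKg len_invg ?(len_S Ss) //; exact: SN.
Qed.

Lemma len_le_MS s n : S s -> N n -> len n <= (len (n * s)).+1.
Proof.
move=> Ss Nn; have := len_mul_le (NM Nn (SN Ss)) (NV (SN Ss)).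
by rewrite mulgK len_invg ?(len_S Ss) ?addn1 //; exact: SN.
Qed.

Lemma len_first n k : N n -> len n = k.+1 ->
  exists a n', [/\ S a, N n', n = a * n' & len n' = k].
Proof.
move=> Nn E; have [l [Sl sz [h Hh En]]] := len_reduced Nn.
case: l Sl sz En => [|a l]; first by rewrite E.
case/List.Forall_cons_iff=> Sa Sl; rewrite E => -[sz] En.
have Nn' : N (wprod l * h) by apply: NM (wprodN Sl) (HN Hh).
exists a, (wprod l * h); split=> //; first by rewrite En mulgA.
apply/eqP; rewrite eqn_leq; apply/andP; split.
  by rewrite -sz; apply: len_le_size Sl (eqH_mulH _ Hh).
by rewrite -ltnS -E En -[wprod (a :: l)]/(a * wprod l) -mulgA len_SM_le.
Qed.

Lemma len_last n k : N n -> len n = k.+1 ->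
  exists n' a, [/\ S a, N n', n = n' * a & len n' = k].
Proof.
move=> Nn E; have [l [Sl sz [h Hh En]]] := len_reduced Nn.
case/lastP: l Sl sz En => [|l a]; first by rewrite E.
rewrite size_rcons E wprod_rcons => /Forall_rcons[Sl Sa] [sz] En.
have [h' Hh' E'] := NH_swap Hh (SN Sa).
have Nn' : N (wprod l * h') by apply: NM (wprodN Sl) (HN Hh').
exists (wprod l * h'), a; split=> //; first by rewrite En -mulgA E' mulgA.
apply/eqP; rewrite eqn_leq; apply/andP; split.
  by rewrite -sz; apply: len_le_size Sl (eqH_mulH _ Hh').
by rewrite -ltnS -E En -mulgA E' mulgA len_MS_le.
Qed.

Lemma reduced_cat l1 l2 : Forall S l1 -> Forall S l2 ->
  len (wprod (l1 ++ l2)) = size l1 + size l2 ->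
  len (wprod l1) = size l1 /\ len (wprod l2) = size l2.
Proof.
move=> S1 S2 E; have h1 := len_wprod_le S1; have h2 := len_wprod_le S2.
have := len_mul_le (wprodN S1) (wprodN S2); rewrite -wprod_cat E => h3.
split; apply/eqP; rewrite eqn_leq ?h1 ?h2 /=; lia.
Qed.

(** * Double cosets and the exchange condition *)

Lemma dcoset_refl n : dcoset B n n.
Proof. by exists 1, 1; rewrite mulg1 mul1g; do !split; exact: B1. Qed.

Lemma dcoset_mulr n g b : dcoset B n g -> B b -> dcoset B n (g * b).
Proof.
case=> b1 [b2 [B1' [B2 ->]]] Bb; exists b1, (b2 * b).
by rewrite !mulgA; do !split=> //; exact: BM.
Qed.

Lemma dcoset_mull n g b : dcoset B n g -> B b -> dcoset B n (b * g).
Proof.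
case=> b1 [b2 [B1' [B2 ->]]] Bb; exists (b * b1), b2.
by rewrite !mulgA; do !split=> //; exact: BM.
Qed.

Lemma dcoset_eqH n n' g : eqH n n' -> dcoset B n g -> dcoset B n' g.
Proof.
case=> h Hh -> [b1 [b2 [B1' [B2 ->]]]]; exists b1, (h * b2); rewrite !mulgA.
by do !split=> //; apply: BM (HB Hh) B2.
Qed.

Lemma dcoset_invg n g : dcoset B n g -> dcoset B n^-1 g^-1.
Proof.
case=> b1 [b2 [B1' [B2 ->]]]; exists b2^-1, b1^-1; rewrite !invgM mulgA.
by do !split=> //; exact: BV.
Qed.

Lemma dcoset_sym n g : dcoset B n g -> dcoset B g n.
Proof.
case=> b1 [b2 [B1' [B2 ->]]]; exists b1^-1, b2^-1.
by rewrite !mulgA mulVg mul1g mulgK; do !split=> //; exact: BV.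
Qed.

Lemma dcoset_trans n g g' : dcoset B n g -> dcoset B g g' -> dcoset B n g'.
Proof.
case=> b1 [b2 [B1' [B2 ->]]] [b3 [b4 [B3 [B4 ->]]]].
by exists (b3 * b1), (b2 * b4); rewrite !mulgA; do !split=> //; exact: BM.
Qed.

Lemma dcoset_H_B n g : H n -> dcoset B n g -> B g.
Proof. by move=> /HB Bn [b1 [b2 [B1' [B2 ->]]]]; apply: BM (BM B1' Bn) B2. Qed.

Lemma dcoset_Smul s n g : S s -> N n -> dcoset B n g ->
  dcoset B n (s * g) \/ dcoset B (s * n) (s * g).
Proof.
move=> Ss Nn [b1 [b2 [B1' [B2 ->]]]]; rewrite !mulgA.
by case: (dcoset_SBN Ss Nn B1') => h; [left | right]; apply: dcoset_mulr.
Qed.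

Lemma dcoset_mulS s n g : S s -> N n -> dcoset B n g ->
  dcoset B n (g * s) \/ dcoset B (n * s) (g * s).
Proof.
move=> Ss Nn Cg; have Hss := HV (H_sq Ss).
have Cg' : dcoset B n^-1 ((s * s)^-1 * g^-1) by apply: dcoset_mull (dcoset_invg Cg) (HB Hss).
have E : (s * ((s * s)^-1 * g^-1))^-1 = g * s by rewrite !invgM !invgK !mulgA mulgK.
case: (dcoset_Smul Ss (NV Nn) Cg') => /dcoset_invg; rewrite E; first by rewrite invgK; left.
rewrite invgM invgK => C; right; apply: dcoset_eqH C.
by rewrite (invg_sq s) mulgA; exact: eqH_mulH.
Qed.

Lemma dcoset_SBS s : S s -> exists2 b, B b & dcoset B s (s * b * s).
Proof.
move=> Ss; have [b Bb nB] : exists2 b, B b & ~ B (s * b * s).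
  apply: contrapT => hn; apply: (S_not_normalizing Ss) => g; split.
    by case=> b [Bb ->]; apply: contrapT => nB; apply: hn; exists b.
  move=> Bg; exists ((s * s)^-1 * (s * g * s) * (s * s)^-1); split.
    have Bss := HB (HV (H_sq Ss)).
    apply: BM (BM Bss _) Bss.
    by apply: contrapT => nB; apply: hn; exists g.
  by rewrite !invgM !mulgA mulgV mul1g mulVg mul1g mulgK mulgVK.
exists b => //; case: (dcoset_SBN Ss (SN Ss) Bb) => // /(dcoset_H_B (H_sq Ss)).
by move/nB.
Qed.

Lemma dcoset_uniq_len k n n' : len n <= k -> N n -> N n' -> len n <= len n' ->
  dcoset B n' n -> eqH n n'.
Proof.
elim: k n n' => [|k IH] n n' + Nn Nn' Hle Cn.
  rewrite leqn0 => /eqP/(len0_H Nn) Hn.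
  have Hn' : H n' by apply/H_BN; split=> //; exact: dcoset_H_B Hn (dcoset_sym Cn).
  by exists (n'^-1 * n); [apply: HM (HV Hn') Hn | rewrite mulgA mulgV mul1g].
case E: (len n) => [|j] lenk; first by apply: IH; rewrite ?E.
have [a [n1 [Sa Nn1 En Ln1]]] := len_first Nn E.
have Nan' : N (a * n') := NM (SN Sa) Nn'.
have Cn1 : dcoset B n' ((a * a)^-1 * n) := dcoset_mull Cn (HB (HV (H_sq Sa))).
have E1 : a * ((a * a)^-1 * n) = n1 by rewrite mulgA -invg_sq En mulKg.
have Ljk : j <= k := lenk.
have Ljn' : j <= len n' by apply: ltnW; rewrite -E.
rewrite En; case: (dcoset_Smul Sa Nn' Cn1); rewrite E1 => C1.
  have /(len_eqH Nn') Lj : eqH n1 n' by apply: IH C1; rewrite ?Ln1.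
  by move: Hle; rewrite E -Lj Ln1 ltnn.
have Ljan' : j <= len (a * n') by rewrite -ltnS -E (leq_trans Hle (len_le_SM Sa Nn')).
apply: eqH_trans (eqH_mul2l a (IH n1 (a * n') _ Nn1 Nan' _ C1)) _; rewrite ?Ln1 //.
exact: eqH_mulSS.
Qed.

Lemma dcoset_uniq n n' g : N n -> N n' -> dcoset B n g -> dcoset B n' g -> eqH n n'.
Proof.
move=> Nn Nn' Cn Cn'; case: (leqP (len n) (len n')) => h.
  exact: dcoset_uniq_len (leqnn _) Nn Nn' h (dcoset_trans Cn' (dcoset_sym Cn)).
apply: eqH_sym; apply: dcoset_uniq_len (leqnn _) Nn' Nn (ltnW h) _.
exact: dcoset_trans Cn (dcoset_sym Cn').
Qed.

Lemma dcoset_ascent s w b : S s -> N w -> len w <= len (s * w) -> B b ->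
  dcoset B (s * w) (s * b * w).
Proof.
move: (leqnn (len w)); move: {2}(len w) => k.
elim: k s w => [|k IH] s w + Ss Nw Hasc Bb.
  rewrite leqn0 => /eqP/(len0_H Nw) Hw.
  have -> : s * b * w = s * w * (w^-1 * (b * w)) by rewrite mulgA mulgK mulgA.
  by apply: dcoset_mulr (dcoset_refl _) (BM (BV (HB Hw)) (BM Bb (HB Hw))).
case E: (len w) => [|j] lenk; first by apply: IH; rewrite ?E.
have [w' [t [St Nw' Ew Lw']]] := len_last Nw E.
have Nsw' : N (s * w') := NM (SN Ss) Nw'.
case: (dcoset_Smul Ss Nw (dcoset_mull (dcoset_refl w) Bb)); rewrite mulgA => // Cw.
rewrite E in Hasc; case: (leqP (len w') (len (s * w'))) => [Hasc' | Hdesc]; last first.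
  move: Hasc; rewrite Ew mulgA => /leq_trans/(_ (len_MS_le St Nsw')).
  by rewrite -Lw' ltnS leqNgt Hdesc.
have C1 := IH s w' (leq_trans (eq_leq Lw') lenk) Ss Nw' Hasc' Bb.
case: (dcoset_mulS St Nsw' C1) => C2; last by rewrite Ew !mulgA.
rewrite -(mulgA (s * b)) -Ew in C2.
have [h Hh Ew2] := dcoset_uniq Nw Nsw' Cw C2.
move: Hasc; rewrite Ew2 mulgA (len_mulH (NM (SN Ss) Nsw') Hh).
by rewrite (len_eqH Nw' (eqH_mulSS Ss Nw')) Lw' ltnn.
Qed.

Lemma dcoset_ascent_r s w b : S s -> N w -> len w <= len (w * s) -> B b ->
  dcoset B (w * s) (w * b * s).
Proof.
move=> Ss Nw Hasc Bb; have Hss := HV (H_sq Ss).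
have L : len (s * w^-1) = len (w * s).
  rewrite -[s * w^-1]invgK invgM invgK len_invg; last exact: NM Nw (NV (SN Ss)).
  by rewrite (invg_sq s) mulgA (len_mulH _ Hss) //; exact: NM Nw (SN Ss).
have := dcoset_ascent Ss (NV Nw) _ (BM (HB Hss) (BV Bb)).
rewrite L len_invg // => /(_ Hasc)/dcoset_invg; rewrite !invgM !invgK !mulgA mulgK => C.
by apply: dcoset_eqH C; rewrite (invg_sq s) mulgA; exact: eqH_mulH.
Qed.

Lemma len_SM_neq s w : S s -> N w -> len (s * w) <> len w.
Proof.
move=> Ss Nw E; have Nsw := NM (SN Ss) Nw.
have [b Bb [b1 [b2 [B1' [B2 Eb]]]]] := dcoset_SBS Ss.
have C1 : dcoset B w (s * b * (s * w)).
  apply: dcoset_eqH (eqH_mulSS Ss Nw) _; apply: dcoset_ascent => //.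
  by rewrite E (len_eqH Nw (eqH_mulSS Ss Nw)).
have C2 : dcoset B (s * w) (s * b * (s * w)).
  rewrite mulgA Eb -!mulgA; apply: dcoset_mull B1'.
  by rewrite mulgA; apply: dcoset_ascent; rewrite ?E.
have [h Hh Ew] := dcoset_uniq Nw Nsw C1 C2.
apply: (S_notH Ss); have -> : s = w * (h^-1 * w^-1) by rewrite mulgA {1}Ew !mulgK.
exact: HJV (HV Hh) Nw.
Qed.

Lemma len_MS_neq s w : S s -> N w -> len (w * s) <> len w.
Proof.
move=> Ss Nw E; have Hss := HV (H_sq Ss).
apply: (len_SM_neq Ss (NM (HN Hss) (NV Nw))).
rewrite mulgA -invg_sq -invgM len_invg ?E; last exact: NM Nw (SN Ss).
by rewrite len_Hmul ?len_invg //; exact: NV.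
Qed.

Lemma len_MS s w : S s -> N w ->
  len (w * s) = (len w).+1 \/ len w = (len (w * s)).+1.
Proof.
move=> Ss Nw; have := len_MS_le Ss Nw; have := len_le_MS Ss Nw.
have := len_MS_neq Ss Nw; lia.
Qed.

Lemma exchange_step t c v : S t -> S c -> N v -> len v <= len (v * c) ->
  len (t * v * c) < len (t * v) -> eqH (t * v * c) v.
Proof.
move=> St Sc Nv Hasc Hdesc.
have Ntv := NM (SN St) Nv; have Nvc := NM Nv (SN Sc).
have [b Bb [b1 [b2 [B1' [B2 Eb]]]]] := dcoset_SBS Sc.
have C1 : dcoset B (t * v) (t * v * c * b * c).
  apply: dcoset_eqH (eqH_mulSSr _ Sc) _; apply: dcoset_ascent_r => //.
    exact: NM Ntv (SN Sc).
  by rewrite (len_eqH Ntv (eqH_mulSSr _ Sc)) ltnW.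
have C2 : dcoset B (v * c) (v * (c * b * c)).
  by rewrite Eb !mulgA; apply: dcoset_mulr B2; exact: dcoset_ascent_r.
case: (dcoset_Smul St Nvc C2); rewrite !mulgA => C3.
  have [h Hh ->] := dcoset_uniq Ntv Nvc C1 C3.
  have [h' Hh' E] := HN_swap Hh (SN Sc).
  by rewrite -mulgA E mulgA; exact: eqH_trans (eqH_mulH _ Hh') (eqH_mulSSr _ Sc).
have [h Hh E] := dcoset_uniq Ntv (NM Ntv (SN Sc)) C1 C3.
have /mulg1_eq Ech : c * h = 1 by apply: (mulgI (t * v)); rewrite mulg1 {2}E !mulgA.
by case: (S_notH Sc); rewrite -[c]invgK Ech; exact: HV.
Qed.

Lemma reduced_behead a l : Forall S (a :: l) ->
  len (wprod (a :: l)) = size (a :: l) -> len (wprod l) = size l.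
Proof.
case/List.Forall_cons_iff=> Sa Sl E; apply/eqP; rewrite eqn_leq len_wprod_le //=.
by rewrite -ltnS -[(size l).+1]/(size (a :: l)) -E; exact: len_SM_le Sa (wprodN Sl).
Qed.

Lemma exchange l c : Forall S l -> S c -> len (wprod l) = size l ->
  len (wprod l * c) < size l ->
  exists l1 a l2, l = l1 ++ a :: l2 /\ eqH (wprod l * c) (wprod (l1 ++ l2)).
Proof.
elim: l => [|a l IH] // Sal Sc Hred Hdesc; have /List.Forall_cons_iff[Sa Sl] := Sal.
have Hred' := reduced_behead Sal Hred.
case: (ltnP (len (wprod l * c)) (size l)) => Hdesc'.
  have [l1 [a' [l2 [-> E]]]] := IH Sl Sc Hred' Hdesc'.
  by exists (a :: l1), a', l2; split=> //=; rewrite -mulgA; exact: eqH_mul2l.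
exists [::], a, l; split=> //=; apply: exchange_step => //; first exact: wprodN.
  by rewrite Hred'.
by rewrite -Hred in Hdesc.
Qed.

Lemma conjB_descent s w y : S s -> N w -> len w <= len (s * w) -> B y ->
  B (s * w * y * (s * w)^-1) -> B (w * y * w^-1).
Proof.
move=> Ss Nw Hasc By; set b := s * w * y * (s * w)^-1 => Bc.
have Hss := HV (H_sq Ss); have Nsw := NM (SN Ss) Nw.
have Ez : w * y * w^-1 = (s * s)^-1 * (s * b * s).
  by rewrite /b !invgM !mulgA mulgVK -[s^-1 * s^-1 * s]mulgA mulVg mulg1 mulVg mul1g.
case: (dcoset_SBN Ss (SN Ss) Bc) => Cb; last first.
  by rewrite Ez; apply: BM (HB Hss) (dcoset_H_B (H_sq Ss) Cb).
exfalso; apply: (S_notH Ss).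
have C1 : dcoset B (s * w) (w * y).
  case: Cb => [b1 [b2 [B1' [B2 E2]]]].
  have -> : w * y = ((s * s)^-1 * b1) * (s * b2 * w) by rewrite -[w * y](mulgVK w) Ez E2 !mulgA.
  by apply: dcoset_mull; [apply: dcoset_ascent | exact: BM (HB Hss) B1'].
have C2 : dcoset B w (w * y) by apply: dcoset_mulr (dcoset_refl w) By.
have [h Hh E] := dcoset_uniq Nw Nsw C2 C1.
have -> : s = w * (h^-1 * w^-1) by rewrite mulgA {1}E !mulgK.
exact: HJV (HV Hh) Nw.
Qed.

(** * Parabolic cosets *)

Lemma exchange_cat (P : gT -> Prop) w l c : (forall a, P a -> S a) ->
  Forall S w -> Forall P l -> S c ->
  len (wprod (w ++ l)) = size w + size l -> len (wprod (w ++ l) * c) < size w + size l ->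
  (exists2 w', Forall S w' & size w' < size w /\ eqH (wprod (w ++ l) * c) (wprod (w' ++ l)))
  \/ (exists2 l', Forall P l' & size l' < size l /\ eqH (wprod l * c) (wprod l')).
Proof.
move=> PS Sw Pl Sc; have Sl := List.Forall_impl _ PS Pl.
rewrite -size_cat => Hred Hdesc.
have [L1 [a [L2 [Ewl E]]]] := exchange (proj2 (List.Forall_app _ _ _) (conj Sw Sl)) Sc Hred Hdesc.
case: (cat_split Ewl) => [[M [Ew EL2]] | [M [EL1 El]]].
  left; exists (L1 ++ M).
    move: Sw; rewrite Ew => /List.Forall_app[? /List.Forall_cons_iff[_ ?]].
    exact/List.Forall_app.
  split; last by rewrite -catA -EL2.
  by rewrite Ew !size_cat /= addnS ltnS leqnn.
right; exists (M ++ L2).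
  move: Pl; rewrite El => /List.Forall_app[? /List.Forall_cons_iff[_ ?]].
  exact/List.Forall_app.
split; first by rewrite El !size_cat /= addnS ltnS leqnn.
by apply: (@eqH_mul2lI (wprod w)); rewrite mulgA -!wprod_cat catA -EL1.
Qed.

Section ParabolicCosets.

Variable J : gT -> Prop.
Hypothesis JS : forall a, J a -> S a.

Lemma wordJ_shorten l : Forall J l -> len (wprod l) < size l ->
  exists2 l', Forall J l' & size l' < size l /\ eqH (wprod l) (wprod l').
Proof.
elim/last_ind: l => [|l f IH] //; rewrite wprod_rcons size_rcons => /Forall_rcons[Jl Jf] Hlt.
have Nl := wprodN (List.Forall_impl _ JS Jl).
case: (ltnP (len (wprod l)) (size l)) => Hl.
  have [l' Jl' [sz E]] := IH Jl Hl; exists (rcons l' f); first exact/Forall_rcons.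
  by rewrite size_rcons wprod_rcons ltnS; split=> //; exact: eqH_mul2r (SN (JS Jf)) E.
have Hred : len (wprod l) = size l.
  by apply/eqP; rewrite eqn_leq Hl andbT; exact: len_wprod_le (List.Forall_impl _ JS Jl).
have Hdesc : len (wprod l * f) < size l.
  by have := len_MS (JS Jf) Nl; move: Hlt; rewrite Hred; lia.
have := @exchange_cat J [::] l f JS (List.Forall_nil _) Jl (JS Jf) Hred Hdesc.
case=> [[w' _ []] // | [l' Jl' [sz E]]].
by exists l'; rewrite // ltnW.
Qed.

Lemma wordJ_reduce n l : size l <= n -> Forall J l ->
  exists2 l', Forall J l' & len (wprod l') = size l' /\ eqH (wprod l) (wprod l').
Proof.
elim: n l => [|n IH] l Hn Jl.
  by case: l Hn Jl => // _ _; exists [::] => //; split; [exact: len_H H1 | exact: eqH_refl].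
case: (ltnP (len (wprod l)) (size l)) => Hl.
  have [l' Jl' [sz E]] := wordJ_shorten Jl Hl.
  have [l'' Jl'' [R E']] := IH l' (leq_trans sz Hn) Jl'.
  by exists l'' => //; split=> //; exact: eqH_trans E E'.
exists l => //; split; last exact: eqH_refl.
by apply/eqP; rewrite eqn_leq Hl andbT; exact: len_wprod_le (List.Forall_impl _ JS Jl).
Qed.

Lemma inNJ_reduced u : inNJ J u ->
  exists2 l, Forall J l & len (wprod l) = size l /\ eqH u (wprod l).
Proof.
case=> l0 Jl0 Eu; have [l Jl [R E]] := wordJ_reduce (leqnn _) Jl0.
by exists l => //; split=> //; exact: eqH_trans Eu E.
Qed.

Lemma inNJ_wprod l : Forall J l -> inNJ J (wprod l).
Proof. by exists l => //; exact: eqH_refl. Qed.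

Lemma coset_min_len_add x0 : N x0 ->
  (forall y, inNJ J (x0^-1 * y) -> len x0 <= len y) ->
  forall l, Forall J l -> len (wprod l) = size l -> len (x0 * wprod l) = len x0 + size l.
Proof.
move=> Nx0 x0_min; elim/last_ind => [|l f IH]; first by rewrite mulg1 addn0.
case/Forall_rcons=> Jl Jf; have Sl := List.Forall_impl _ JS Jl; have Sf := JS Jf.
rewrite wprod_rcons size_rcons mulgA addnS => Hred.
have [Rl _] : len (wprod l) = size l /\ len (wprod [:: f]) = size [:: f].
  apply: reduced_cat (List.Forall_cons _ Sf (List.Forall_nil _)) _ => //.
  by rewrite cats1 wprod_rcons Hred addn1.
have Nx0l := NM Nx0 (wprodN Sl); rewrite -(IH Jl Rl).
case: (len_MS Sf Nx0l) => // Hdesc; exfalso.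
have [w0 [Sw0 sz0 Ex0]] := len_reduced Nx0.
have Ex0l : eqH (x0 * wprod l) (wprod (w0 ++ l)).
  by rewrite wprod_cat; exact: eqH_mul2r (wprodN Sl) Ex0.
have NW := wprodN (proj2 (List.Forall_app _ _ _) (conj Sw0 Sl)).
have Ex0lf := eqH_mul2r (SN Sf) Ex0l.
have HredW : len (wprod (w0 ++ l)) = size w0 + size l.
  by rewrite -(len_eqH NW Ex0l) IH // sz0.
have HdescW : len (wprod (w0 ++ l) * f) < size w0 + size l.
  by rewrite -(len_eqH (NM NW (SN Sf)) Ex0lf) -HredW -(len_eqH NW Ex0l) Hdesc.
case: (exchange_cat JS Sw0 Jl Sf HredW HdescW) => [[w' Sw' [sz E]] | [l' Jl' [sz E]]].
  suff /x0_min : inNJ J (x0^-1 * wprod w').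
    by move/leq_trans/(_ (len_wprod_le Sw')); rewrite -sz0 leqNgt sz.
  case: E => h Hh E; case: Ex0 => h0 Hh0 Ex0.
  have -> : x0^-1 * wprod w' = h0^-1 * (wprod l * f * h^-1 * (wprod l)^-1).
    rewrite -[wprod w'](mulgK (wprod l)) -wprod_cat -[wprod (w' ++ l)](mulgK h) -E.
    by rewrite wprod_cat Ex0 invgM !mulgA mulgVK.
  have NJl := inNJ_wprod Jl.
  have NJlfh := inNJ_mul JS (inNJ_mul JS NJl (inNJ_J Jf)) (inNJ_H J (HV Hh)).
  exact (inNJ_mul JS (inNJ_H J (HV Hh0)) (inNJ_mul JS NJlfh (inNJ_invg JS NJl))).
by have := len_le_size (List.Forall_impl _ JS Jl') E; rewrite Hred; lia.
Qed.

Lemma ascents_len_add x : N x -> (forall a, J a -> len x < len (x * a)) ->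
  forall l, Forall J l -> len (wprod l) = size l -> len (x * wprod l) = len x + size l.
Proof.
move=> Nx x_asc.
have coset_len : exists k, asbool (exists y, inNJ J (x^-1 * y) /\ len y = k).
  exists (len x); apply/asboolP; exists x; split=> //.
  by rewrite mulVg; exact (inNJ_H J H1).
case: (ex_minnP coset_len) => _ /asboolP[x0 [Cx0 <-]] x0_min.
have coset_x0 y : inNJ J (x0^-1 * y) -> inNJ J (x^-1 * y).
  move=> Cy; have -> : x^-1 * y = x^-1 * x0 * (x0^-1 * y) by rewrite !mulgA mulgK.
  exact (inNJ_mul JS Cx0 Cy).
have Nx0 : N x0 by rewrite -(mulVKg x x0); exact: NM Nx (inNJ_N JS Cx0).
have add0 : forall l, Forall J l -> len (wprod l) = size l ->
    len (x0 * wprod l) = len x0 + size l.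
  apply: coset_min_len_add Nx0 _ => y /coset_x0 Cy.
  by apply: x0_min; apply/asboolP; exists y.
have [m Jm [Rm Em]] := inNJ_reduced (inNJ_invg JS Cx0).
have Ex : eqH x (x0 * wprod m).
  by rewrite -{1}[x](mulVKg x0) -[x0^-1 * x]invgK invgM invgK; exact: eqH_mul2l.
have Sm := List.Forall_impl _ JS Jm; have Nx0m := NM Nx0 (wprodN Sm).
have Lx : len x = len x0 + size m by rewrite (len_eqH Nx0m Ex) add0.
have m0 : m = [::].
  case/lastP: m Jm Rm Em Ex Sm Nx0m Lx => // m f /Forall_rcons[Jm Jf] _ _ Ex _ _ Lx.
  have Sm := List.Forall_impl _ JS Jm; have Sf := JS Jf.
  have Nx0m := NM Nx0 (wprodN Sm).
  have := x_asc f Jf; rewrite Lx size_rcons.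
  have Exf : eqH (x * f) (x0 * wprod m).
    apply: eqH_trans (eqH_mul2r (SN Sf) Ex) _.
    by rewrite wprod_rcons !mulgA; exact: eqH_mulSSr.
  rewrite (len_eqH Nx0m Exf); have := len_mul_le Nx0 (wprodN Sm).
  have := len_wprod_le Sm; lia.
move=> l Jl Rl; move: Ex Lx; rewrite m0 [wprod _]/= mulg1 addn0 => Ex ->.
have Nl := wprodN (List.Forall_impl _ JS Jl).
by rewrite (len_eqH (NM Nx0 Nl) (eqH_mul2r Nl Ex)) add0.
Qed.

End ParabolicCosets.

(** * Dihedral words and the longest element *)

Lemma alt_braid k a b : S a -> S b -> len (wprod (alt a b k)) = k ->
  len (wprod (alt a b k.+1)) <= k -> eqH (wprod (alt a b k)) (wprod (alt b a k)).
Proof.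
elim: k a b => [|k IH] a b Sa Sb Hred Hd.
  by move: Hd; rewrite /= mulg1 (len_S Sa).
set c := if odd k then a else b; have Sc : S c by rewrite /c; case: (odd k).
set v := wprod (alt b a k); have Nv : N v := wprodN (Forall_alt _ Sb Sa).
have Eav : wprod (alt a b k.+1) = a * v by [].
have Evc : wprod (alt b a k.+1) = v * c by rewrite alt_rcons wprod_rcons.
have Eavc : wprod (alt a b k.+2) = a * v * c.
  by rewrite -[alt a b k.+2]/(a :: alt b a k.+1) alt_rcons wprod_cons wprod_rcons mulgA.
have Lv : len v = k.
  have := @reduced_behead a (alt b a k) (Forall_alt k.+1 Sa Sb).
  by rewrite [size _]/= size_alt => /(_ Hred).
rewrite Eav Evc; rewrite Eav in Hred; rewrite Eavc in Hd.
case: (len_MS Sc Nv) => Lvc.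
  have Hdesc : len (a * v * c) < len (a * v).
    by have := len_MS_neq Sc (NM (SN Sa) Nv); rewrite Hred ltn_neqAle Hd andbT => /eqP.
  have [h Hh E] := exchange_step Sa Sc Nv (ltnW (eq_leq (esym Lvc))) Hdesc.
  exists (c^-1 * (h * c) * (c * c)^-1); first exact: HM (HJ Hh (SN Sc)) (HV (H_sq Sc)).
  by rewrite !mulgA mulgK -E -(mulgA (a * v)) mulgK.
have [k' Ek] : exists k', k = k'.+1 by move: Lvc; rewrite Lv; case: (k) => // k'; exists k'.
have Ev : eqH v (wprod (alt a b k)) by apply: IH => //; rewrite Evc -Lv Lvc.
have Nw' := wprodN (Forall_alt k' Sb Sa); have := len_wprod_le (Forall_alt k' Sb Sa).
have := len_eqH (NM (SN Sa) (wprodN (Forall_alt k Sa Sb))) (eqH_mul2l a Ev).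
rewrite Hred Ek [alt a b k'.+1]/= wprod_cons (len_eqH Nw' (eqH_mulSS Sa Nw')) size_alt.
lia.
Qed.

Lemma reduced_take l i : Forall S l -> len (wprod l) = size l ->
  len (wprod (take i l)) = size (take i l).
Proof.
move=> Sl; rewrite -{1 2}(cat_take_drop i l) size_cat => R.
have /List.Forall_app[St Sd] : Forall S (take i l ++ drop i l) by rewrite cat_take_drop.
exact: (reduced_cat St Sd R).1.
Qed.

Lemma alt_reduced_max r s bnd : S r -> S s ->
  (forall k, len (wprod (alt r s k)) = k -> k <= bnd) ->
  exists M, [/\ 0 < M, forall i, i <= M -> len (wprod (alt r s i)) = i
                     & len (wprod (alt r s M.+1)) <= M].
Proof.
move=> Sr Ss bounded.
have red0 : exists k, asbool (len (wprod (alt r s k)) = k).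
  by exists 0; apply/asboolP; exact: len_H H1.
have bounded' k : asbool (len (wprod (alt r s k)) = k) -> k <= bnd by move/asboolP/bounded.
case: (ex_maxnP red0 bounded') => M /asboolP RM M_max; exists M; split.
- by apply: M_max; apply/asboolP; rewrite /= mulg1 len_S.
- move=> i leiM; have := reduced_take i (Forall_alt M Sr Ss).
  by rewrite size_alt (alt_take r s leiM) => /(_ RM); rewrite size_alt.
- have := len_wprod_le (Forall_alt M.+1 Sr Ss); rewrite size_alt leq_eqVlt.
  by case/orP=> [/eqP/asboolP/M_max | //]; rewrite ltnn.
Qed.

Lemma conjB_suffix x n y : N x -> N n -> len (x * n) = len x + len n ->
  B y -> B (x * n * y * (x * n)^-1) -> B (n * y * n^-1).
Proof.
move: {2}(len x) (erefl (len x)) => k; elim: k x => [|k IH] x Lx Nx Nn Ladd By Bc.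
  have /HB Bx := len0_H Nx Lx.
  have -> : n * y * n^-1 = x^-1 * (x * n * y * (x * n)^-1) * x.
    by rewrite invgM !mulgA mulVg mul1g mulgVK.
  exact: BM (BM (BV Bx) Bc) Bx.
have [a [x' [Sa Nx' Ex Lx']]] := len_first Nx Lx.
have Nx'n := NM Nx' Nn.
have Ladd' : len (a * (x' * n)) = k.+1 + len n by rewrite mulgA -Ex -Lx.
have L1 : len (x' * n) = len x' + len n.
  have := len_mul_le Nx' Nn; have := len_SM_le Sa Nx'n.
  by move: Ladd'; rewrite Lx'; set u := len (x' * n); lia.
apply: (IH x') => //; apply: (conjB_descent Sa Nx'n) => //.
  by rewrite Ladd' L1 Lx' leq_add2r.
by move: Bc; rewrite Ex !mulgA.
Qed.

Section LongestElement.

Variable n0 : gT.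
Hypothesis Nn0 : N n0.
Hypothesis len_max : forall n, N n -> len n <= len n0.

Definition prefix_n0 y : Prop := len y + len (y^-1 * n0) = len n0.

Lemma len_prefix_n0_ge y : N y -> len n0 <= len y + len (y^-1 * n0).
Proof. by move=> Ny; have := len_mul_le Ny (NM (NV Ny) Nn0); rewrite mulVKg. Qed.

Lemma prefix_n0_eqH y y' : N y -> eqH y' y -> prefix_n0 y -> prefix_n0 y'.
Proof.
move=> Ny [h Hh ->]; rewrite /prefix_n0 (len_mulH Ny Hh) invgM -mulgA.
by rewrite (len_Hmul (NM (NV Ny) Nn0) (HV Hh)).
Qed.

Lemma prefix_n0_prefix y w : N y -> N w -> prefix_n0 (y * w) ->
  len (y * w) = len y + len w -> prefix_n0 y.
Proof.
move=> Ny Nw; rewrite /prefix_n0 => Pyw Lyw.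
have E : w * ((y * w)^-1 * n0) = y^-1 * n0 by rewrite invgM !mulgA mulgV mul1g.
have := len_mul_le Nw (NM (NV (NM Ny Nw)) Nn0); rewrite E.
have := len_prefix_n0_ge Ny; move: Pyw Lyw.
set z := len ((y * w)^-1 * n0); set u := len (y^-1 * n0); set v := len (y * w); lia.
Qed.

Lemma prefix_n0_extend x : N x -> prefix_n0 x -> len x < len n0 ->
  exists2 r, S r & len (x * r) = (len x).+1 /\ prefix_n0 (x * r).
Proof.
move=> Nx Px Lx; have Nv := NM (NV Nx) Nn0.
case Lv: (len (x^-1 * n0)) => [|j].
  by move: Px Lx; rewrite /prefix_n0 Lv addn0 => ->; rewrite ltnn.
have [r [v [Sr Nv' Ev Lv']]] := len_first Nv Lv.
have Nxr := NM Nx (SN Sr).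
have Exr : (x * r)^-1 * n0 = v by rewrite invgM -mulgA Ev mulKg.
have := len_prefix_n0_ge Nxr; have := len_MS_le Sr Nx.
move: Px; rewrite /prefix_n0 Exr Lv Lv' => Px Lxr Lge.
by exists r => //; rewrite /prefix_n0 Exr Lv'; move: Lxr Lge; set a := len (x * r); lia.
Qed.

Lemma prefix_n0_climb x r s M : N x -> S r -> S s -> prefix_n0 (x * r) ->
  (forall i, i <= M -> len (x * wprod (alt r s i)) = len x + i) ->
  (forall y a, N y -> S a -> len x < len y -> prefix_n0 y -> len y < len (y * a) ->
    prefix_n0 (y * a)) ->
  forall i, 0 < i <= M -> prefix_n0 (x * wprod (alt r s i)).
Proof.
move=> Nx Sr Ss Pxr Lalt IH; elim=> [//|i IHi] /andP[_ le_iM].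
case: i IHi le_iM => [|i] IHi le_iM; first by rewrite /= mulg1.
have Sc : S (if odd i.+1 then s else r) by case: (odd i.+1).
have Ly := Lalt i.+1 (ltnW le_iM); have Lyc := Lalt i.+2 le_iM.
rewrite alt_rcons wprod_rcons mulgA in Lyc *.
apply: (IH _ _ (NM Nx (wprodN (Forall_alt _ Sr Ss))) Sc).
- by rewrite Ly addnS ltnS leq_addr.
- by apply: IHi; rewrite (ltnW le_iM).
- by rewrite Lyc Ly !addnS ltnSn.
Qed.

(* With [r] the first letter of [x^-1 n0], both [r] and [s] lengthen [x], so
   [x] is the shortest element of its coset modulo [<r, s>].  Climbing along
   [x r s r ...] up to the braid length and switching to the braid-equal word
   [s r s ...] exhibits [x s] as a prefix of [n0]. *)
Lemma prefix_n0_mulS_step x s : N x -> S s -> prefix_n0 x -> len x < len (x * s) ->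
  (forall y a, N y -> S a -> len x < len y -> prefix_n0 y -> len y < len (y * a) ->
    prefix_n0 (y * a)) ->
  prefix_n0 (x * s).
Proof.
move=> Nx Ss Px Lxs IH; have Nxs := NM Nx (SN Ss).
have [r Sr [Lxr Pxr]] := prefix_n0_extend Nx Px (leq_trans Lxs (len_max Nxs)).
pose J a := a = r \/ a = s; have JS a : J a -> S a by case=> ->.
have Jalt a b k : J a -> J b -> Forall J (alt a b k) by exact: Forall_alt.
have Ladd : forall l, Forall J l -> len (wprod l) = size l -> len (x * wprod l) = len x + size l.
  by apply: (ascents_len_add JS Nx) => a [] ->; rewrite ?Lxr.
have Lalt k : len (wprod (alt r s k)) = k -> len (x * wprod (alt r s k)) = len x + k.
  by move=> Rk; rewrite Ladd ?size_alt //; apply: Jalt; [left | right].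
have bounded k : len (wprod (alt r s k)) = k -> k <= len n0.
  by move/Lalt=> Lk; have := len_max (NM Nx (wprodN (Forall_alt k Sr Ss))); rewrite Lk; lia.
have [M [M_gt0 RM Mmax]] := alt_reduced_max Sr Ss bounded.
have PM : prefix_n0 (x * wprod (alt r s M)).
  apply: (prefix_n0_climb (M := M) Nx Sr Ss Pxr _ IH); last by rewrite M_gt0 leqnn.
  by move=> i /RM/Lalt.
have braid := alt_braid Sr Ss (RM M (leqnn M)) Mmax.
have {PM} : prefix_n0 (x * wprod (alt s r M)).
  apply: prefix_n0_eqH PM; first exact: NM Nx (wprodN (Forall_alt _ Sr Ss)).
  exact: eqH_mul2l (eqH_sym braid).
case: M M_gt0 RM Mmax braid => // M _ RM _ braid.
rewrite [alt s r _]/= wprod_cons mulgA => Pxsw.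
have Nw := wprodN (Forall_alt M Sr Ss).
apply: (prefix_n0_prefix Nxs Nw Pxsw).
have L1 : len (x * s * wprod (alt r s M)) = len x + M.+1.
  rewrite -mulgA -wprod_cons -[s :: alt r s M]/(alt s r M.+1).
  have Nxw := NM Nx (wprodN (Forall_alt M.+1 Sr Ss)).
  rewrite (len_eqH Nxw (eqH_mul2l x (eqH_sym braid))).
  exact: Lalt (RM _ (leqnn _)).
have := len_mul_le Nxs Nw; have := len_MS_le Ss Nx.
have := len_wprod_le (Forall_alt M Sr Ss); rewrite size_alt.
move: L1; set a := len (x * s * _); set b := len (x * s); lia.
Qed.

Lemma prefix_n0_mulS_dist d x s : len n0 - len x <= d -> N x -> S s -> prefix_n0 x ->
  len x < len (x * s) -> prefix_n0 (x * s).
Proof.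
elim: d x s => [|d IH] x s dist Nx Ss Px Lxs.
  by have := len_max (NM Nx (SN Ss)); move: dist Lxs; set u := len (x * s); lia.
apply: prefix_n0_mulS_step => // y a Ny Sa Lxy Py Lya; apply: IH => //.
by have := len_max Ny; move: dist Lxy; lia.
Qed.

Lemma prefix_n0_all n : N n -> prefix_n0 n.
Proof.
move: {2}(len n) (erefl (len n)) => k; elim: k n => [|k IH] n Ln Nn.
  by rewrite /prefix_n0 Ln (len_Hmul Nn0 (HV (len0_H Nn Ln))).
have [n' [a [Sa Nn' En Ln']]] := len_last Nn Ln.
rewrite En; apply: (prefix_n0_mulS_dist (leqnn _)) => //; first exact: IH.
by rewrite -En Ln Ln'.
Qed.

Lemma B_conj_n0 y : B y -> B (n0 * y * n0^-1) -> forall n, N n -> B (n * y * n^-1).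
Proof.
move=> By Bc n Nn; have Nx := NM Nn0 (NV Nn).
have := prefix_n0_all Nx; rewrite /prefix_n0 invgM invgK mulgVK => Ladd.
by apply: (conjB_suffix Nx Nn); rewrite ?mulgVK.
Qed.

End LongestElement.

Lemma weyl_lengthP n k : N n -> weyl_length H S n k <-> k = len n.
Proof.
move=> Nn; have [l [Sl sz E]] := len_reduced Nn.
have wlen : word_of H S n (len n) by apply/word_ofP; exists l.
split=> [[/word_ofP[l' [<- Sl' E']] kmin] | ->].
  by apply/eqP; rewrite eqn_leq len_le_size // andbT; exact: kmin.
by split=> // k' /word_ofP[l' [<- Sl' E']]; exact: len_le_size.
Qed.

Lemma H_meet_UUconjU U n0 : N n0 -> (forall n, N n -> len n <= len n0) ->
  normal_in U B -> (forall g, H g -> U g -> g = 1) ->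
  (forall g, (forall n, N n -> conjset B n g) <-> H g) ->
  forall g, H g -> setmul (setmul U (conjset U n0)) U g -> g = 1.
Proof.
move=> Nn0 len_max [[U1 [UM UV]] [UB _]] HU1 BcapH g Hg.
case=> _ [c [[u [v [Uu [[w [Uw Ev]] ->]]]] [Uc Eg]]].
have Bv : B v.
  have -> : v = u^-1 * g * c^-1 by rewrite Eg mulgA mulgK mulKg.
  exact: BM (BM (UB _ (UV _ Uu)) (HB Hg)) (UB _ (UV _ Uc)).
have Ew : w = n0 * v * n0^-1 by rewrite Ev conjgE !mulgA mulgV mul1g mulgK.
have Bw : B (n0 * v * n0^-1) by rewrite -Ew; exact: UB.
have Hv : H v.
  apply/BcapH => n Nn; exists (n * v * n^-1); split.
    exact (B_conj_n0 Nn0 len_max Bv Bw Nn).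
  by rewrite conjgE !mulgA mulVg mul1g mulgVK.
have w1 : w = 1 by apply: HU1 => //; rewrite Ew -mulgA; exact: HJV.
by apply: HU1 => //; rewrite Eg Ev w1 conj1g mulg1; exact: UM.
Qed.

End BNPairTheory.

Theorem lemma7 (gT : groupType) (H U N S : gT -> Prop) (n0 : gT) :
  split_BN_pair H U N S ->
  finite_weyl N H ->
  longest_rep N H S n0 ->
  forall g : gT, H g -> setmul (setmul U (conjset U n0)) U g -> g = 1.
Proof.
(* Finiteness of the Weyl group is only used through the existence of [n0]. *)
case=> [[subB [subN [_ [H_BN [normH [Sinv [Ngen [BN_mul S_notnorm]]]]]]]] normU HU1 BcapH] _.
case=> Nn0 [k0 [wl0 k0_max]].
have wlP := weyl_lengthP subN H_BN normH Sinv Ngen.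
apply: (H_meet_UUconjU subB subN H_BN normH Sinv Ngen BN_mul S_notnorm Nn0) => // n Nn.
rewrite -((wlP _ _ Nn0).1 wl0); apply: (k0_max n) => //; exact/wlP.
Qed.
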